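(* Every easy pair of words $(x,y)$ over a finite alphabet $\Sigma$ can be separated exactly by a 2-state MCQFA with real amplitudes.
   Context: A pair of words $(x,y)$ means two different words over the same finite alphabet $\Sigma$. It is easy if there is $\sigma\in\Sigma$ with $|x|_\sigma\neq|y|_\sigma$, where $|w|_\sigma$ is the number of occurrences of $\sigma$ in $w$; otherwise it is hard. An $n$-state Moore–Crutchfield quantum finite automaton (MCQFA) over $\Sigma$ consists of states $q_1,\dots,q_n$ (identified with the standard basis vectors of $\mathbb{C}^n$), a unitary matrix $U_\sigma\in\mathbb{C}^{n\times n}$ for each $\sigma\in\Sigma$, an initial unit vector $|u_0\rangle\in\mathbb{C}^n$, and a set $Q_a$ of accepting states. On input $w=w_1\cdots w_k$ the final state is $|u_f^w\rangle=U_{w_k}\cdots U_{w_1}|u_0\rangle$ and $w$ is accepted with probability $\sum_{q_j\in Q_a}|\langle q_j|u_f^w\rangle|^2$. It has real amplitudes if all $U_\sigma$ and $|u_0\rangle$ are real. A pair $(x,y)$ is separated exactly if one word is accepted with probability $1$ and the other with probability $0$. *)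

From mathcomp Require Import all_boot.
From Stdlib Require Import Reals.

Set Implicit Arguments.
Unset Strict Implicit.
Unset Printing Implicit Defensive.

Local Open Scope R_scope.

Record mat2 := Mat2 { m11 : R; m12 : R; m21 : R; m22 : R }.
Definition vec2 := (R * R)%type.

(* M^T M = I : a real matrix is unitary iff it is orthogonal. *)
Definition unitary2 (M : mat2) : Prop :=
  m11 M * m11 M + m21 M * m21 M = 1 /\
  m12 M * m12 M + m22 M * m22 M = 1 /\
  m11 M * m12 M + m21 M * m22 M = 0.

Definition mv2 (M : mat2) (v : vec2) : vec2 :=
  (m11 M * fst v + m12 M * snd v, m21 M * fst v + m22 M * snd v).

Definition unit_vec2 (v : vec2) : Prop := fst v * fst v + snd v * snd v = 1.

(* A 2-state MCQFA with real amplitudes over alphabet Sigma: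
   states q1, q2 (indexed by 'I_2), unitary (here: real orthogonal) matrices U s,
   initial unit vector u0, accepting set Qa. *)
Record MCQFA2 (Sigma : finType) := {
  U : Sigma -> mat2;
  u0 : vec2;
  Qa : {set 'I_2}
}.

Definition wf_MCQFA2 (Sigma : finType) (A : MCQFA2 Sigma) : Prop :=
  (forall s, unitary2 (U A s)) /\ unit_vec2 (u0 A).

(* final state U_{w_k} ... U_{w_1} u0 : the first letter acts first *)
Definition final_state (Sigma : finType) (A : MCQFA2 Sigma) (w : seq Sigma) : vec2 :=
  foldl (fun v s => mv2 (U A s) v) (u0 A) w.

Definition coord2 (v : vec2) (j : 'I_2) : R :=
  if (nat_of_ord j == 0%nat) then fst v else snd v.

Definition acc_prob (Sigma : finType) (A : MCQFA2 Sigma) (w : seq Sigma) : R :=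
  \big[Rplus/0]_(j < 2 | j \in Qa A) (coord2 (final_state A w) j * coord2 (final_state A w) j).

Definition easy_pair (Sigma : finType) (x y : seq Sigma) : Prop :=
  x <> y /\ exists s : Sigma, count_mem s x <> count_mem s y.

Definition separates_exactly (Sigma : finType) (A : MCQFA2 Sigma) (x y : seq Sigma) : Prop :=
  (acc_prob A x = 1 /\ acc_prob A y = 0) \/ (acc_prob A x = 0 /\ acc_prob A y = 1).

(** The automaton rotates the plane by a fixed angle [t] on one letter [s]
    and acts trivially on all others, so after reading [w] its state has
    turned by [count_mem s w * t].  If [s] occurs [a] times in [x] and [b <> a]
    times in [y], taking [t = PI / (2 (b - a))] and starting at angle [- a t]
    leaves [x] on the accepting axis and [y] on the orthogonal one. *)

From HB Require Import structures.
From mathcomp Require Import all_boot.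
From Stdlib Require Import Reals Lra.

Set Implicit Arguments.
Unset Strict Implicit.

Local Open Scope R_scope.

(* [acc_prob] is a big sum over the bare [Rplus]; the bigop lemmas need it as a monoid law. *)
HB.instance Definition _ :=
  Monoid.isComLaw.Build R 0 Rplus (fun a b c => esym (Rplus_assoc a b c))
    Rplus_comm Rplus_0_l.

Definition rot2 (t : R) : mat2 := Mat2 (cos t) (- sin t) (sin t) (cos t).
Definition id2 : mat2 := Mat2 1 0 0 1.

Definition polar2 (t : R) : vec2 := (cos t, sin t).

Lemma unitary2_rot2 (t : R) : unitary2 (rot2 t).
Proof. rewrite /unitary2 /=; have := sin2_cos2 t; rewrite /Rsqr; lra. Qed.

Lemma unitary2_id2 : unitary2 id2.
Proof. rewrite /unitary2 /=; lra. Qed.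

Lemma unit_vec2_polar2 (t : R) : unit_vec2 (polar2 t).
Proof. rewrite /unit_vec2 /=; have := sin2_cos2 t; rewrite /Rsqr; lra. Qed.

Lemma mv2_rot2_polar2 (t p : R) : mv2 (rot2 t) (polar2 p) = polar2 (p + t).
Proof. rewrite /mv2 /polar2 /= cos_plus sin_plus; f_equal; ring. Qed.

Lemma mv2_id2 (v : vec2) : mv2 id2 v = v.
Proof. case: v => v1 v2; rewrite /mv2 /=; f_equal; ring. Qed.

Section LetterCounter.

Variables (Sigma : finType) (s : Sigma) (t p : R).

Definition counter_MCQFA2 : MCQFA2 Sigma :=
  {| U := fun c => if c == s then rot2 t else id2;
     u0 := polar2 p;
     Qa := [set ord0] |}.

Lemma wf_counter_MCQFA2 : wf_MCQFA2 counter_MCQFA2.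
Proof.
split; last exact: unit_vec2_polar2.
by move=> c /=; case: (c == s); [exact: unitary2_rot2 | exact: unitary2_id2].
Qed.

Lemma final_state_counter (w : seq Sigma) :
  final_state counter_MCQFA2 w = polar2 (p + INR (count_mem s w) * t).
Proof.
rewrite /final_state /=; elim: w p => [|c w IHw] q /=.
  by rewrite Rmult_0_l Rplus_0_r.
have -> : INR (count_mem s (c :: w)) = INR (c == s) + INR (count_mem s w).
  by rewrite -plus_INR.
case: (c == s) => /=.
  by rewrite mv2_rot2_polar2 IHw; congr polar2; ring.
by rewrite mv2_id2 IHw Rplus_0_l.
Qed.

Lemma acc_prob_counter (w : seq Sigma) :
  acc_prob counter_MCQFA2 w = cos (p + INR (count_mem s w) * t) ^ 2.
Proof.
rewrite /acc_prob final_state_counter big_mkcond !big_ord_recl big_ord0 /=.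
by rewrite !inE /coord2 /=; ring.
Qed.

End LetterCounter.

Theorem mainTheorem2 (Sigma : finType) (x y : seq Sigma) :
  easy_pair x y ->
  exists A : MCQFA2 Sigma, wf_MCQFA2 A /\ separates_exactly A x y.
Proof.
move=> [_ [s count_neq]].
set a := INR (count_mem s x); set b := INR (count_mem s y).
have ba_neq0 : b - a <> 0.
  by move=> ba_eq0; apply: count_neq; apply: INR_eq; rewrite -/a -/b; lra.
set t := PI / (2 * (b - a)).
exists (counter_MCQFA2 s t (- (a * t))); split; first exact: wf_counter_MCQFA2.
left; rewrite !acc_prob_counter -/a -/b.
have -> : - (a * t) + a * t = 0 by ring.
have -> : - (a * t) + b * t = PI / 2 by rewrite /t; field.
by rewrite cos_0 cos_PI2; split; ring.
Qed.
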